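(* Let $\mathcal{H}$ have dimension $D$ (finite or countably infinite), let $\hat H,\hat H'$ be self-adjoint with orthonormal eigenbases $\{|E_n\rangle\}$, $\{|E'_n\rangle\}$ and eigenvalues $\{E_n\},\{E'_n\}$ satisfying: (A) both spectra are non-degenerate; (B) if $E_k-E_l=E_m-E_n\ne0$ then $k=m$, $l=n$, and likewise for $\{E'_n\}$. Let $\hat\rho^0$ be a density operator, $\hat V$ unitary, $\hbar>0$, $\rho^0_{kl}=\langle E_k|\hat\rho^0|E_l\rangle$, $U_{mn}=\langle E'_m|\hat V|E_n\rangle$, $\rho'_{nn}(\tau)=\sum_{k,l}U_{nk}U_{nl}^*e^{-\mathrm{i}(E_k-E_l)\tau/\hbar}\rho^0_{kl}$, $\mu_n=\sum_k|U_{nk}|^2\rho^0_{kk}$, and $$\nu_{mn}=\sum_{k\neq l}U_{mk}U_{ml}^*U_{nk}^*U_{nl}|\rho^0_{kl}|^2 .$$ Then for all $m,n$, $$\overline{\rho'_{nn}(\tau)}=\mu_n,\qquad \overline{\rho'_{mm}(\tau)\rho'_{nn}(\tau)}=\mu_m\mu_n+\nu_{mn},$$ where $\overline{F(\tau)}=\lim_{T\to\infty}T^{-1}\int_0^TF(\tau)\,d\tau$. *)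

From Stdlib Require Import Reals Arith.
From Coquelicot Require Import Coquelicot.
Open Scope R_scope.

(* Index set of an orthonormal basis of a Hilbert space of dimension D:
   D = Some d : finite dimension d, indices 0..d-1;
   D = None   : countably infinite dimension, indices all of nat. *)
Definition inIb (D : option nat) (k : nat) : bool :=
  match D with Some d => Nat.ltb k d | None => true end.
Definition inI (D : option nat) (k : nat) : Prop := inIb D k = true.

Definition mask (D : option nat) (f : nat -> C) (k : nat) : C :=
  if inIb D k then f k else RtoC 0.

Definition has_csum (D : option nat) (f : nat -> C) (l : C) : Prop :=
  is_series (mask D f) l.

(* value of the sum over the index set (real and imaginary parts summed
   separately; agrees with l whenever has_csum D f l) *)
Definition csum (D : option nat) (f : nat -> C) : C :=
  (Series (fun k => Re (mask D f k)), Series (fun k => Im (mask D f k))).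

Definition delta (m n : nat) : C := if Nat.eqb m n then RtoC 1 else RtoC 0.

Definition cexpi (theta : R) : C := (cos theta, sin theta).

Definition unitary_mx (D : option nat) (U : nat -> nat -> C) : Prop :=
  (forall m n, inI D m -> inI D n ->
     has_csum D (fun k => (U m k * Cconj (U n k))%C) (delta m n)) /\
  (forall k l, inI D k -> inI D l ->
     has_csum D (fun m => (Cconj (U m k) * U m l)%C) (delta k l)).

Definition fsum (D : option nat) (N : nat) (f : nat -> C) : C :=
  sum_n (G := C_AbelianMonoid) (mask D f) N.

Definition density_mx (D : option nat) (rho : nat -> nat -> C) : Prop :=
  (forall k l, inI D k -> inI D l -> rho l k = Cconj (rho k l)) /\
  (forall (N : nat) (x : nat -> C),
     0 <= Re (fsum D N (fun k => fsum D N (fun l =>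
               (Cconj (x k) * rho k l * x l)%C)))) /\
  has_csum D (fun k => rho k k) (RtoC 1).

Definition nondegenerate (D : option nat) (E : nat -> R) : Prop :=
  forall k l, inI D k -> inI D l -> E k = E l -> k = l.

Definition nondegenerate_gaps (D : option nat) (E : nat -> R) : Prop :=
  forall k l m n, inI D k -> inI D l -> inI D m -> inI D n ->
    E k - E l = E m - E n -> E k - E l <> 0 -> k = m /\ l = n.

Definition time_avg_is_R (f : R -> R) (a : R) : Prop :=
  (forall T, 0 < T -> ex_RInt f 0 T) /\
  is_lim (fun T => RInt f 0 T / T) p_infty a.

Definition time_avg_is (F : R -> C) (a : C) : Prop :=
  time_avg_is_R (fun t => Re (F t)) (Re a) /\
  time_avg_is_R (fun t => Im (F t)) (Im a).

Definition rhop (D : option nat) (E : nat -> R) (hbar : R)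
  (U rho : nat -> nat -> C) (n : nat) (tau : R) : C :=
  csum D (fun k => csum D (fun l =>
    (U n k * Cconj (U n l) * cexpi (- ((E k - E l) * tau / hbar)) * rho k l)%C)).

Definition mu (D : option nat) (U rho : nat -> nat -> C) (n : nat) : C :=
  csum D (fun k => (RtoC (Cmod (U n k) ^ 2) * rho k k)%C).

Definition nu (D : option nat) (U rho : nat -> nat -> C) (m n : nat) : C :=
  csum D (fun k => csum D (fun l =>
    if Nat.eqb k l then RtoC 0 else
    (U m k * Cconj (U m l) * Cconj (U n k) * U n l
       * RtoC (Cmod (rho k l) ^ 2))%C)).

(* Expanding in the eigenbasis of H, rho'_nn(tau) is the double series of the
   oscillations U_nk U_nl^* rho_kl e^{-i (E_k - E_l) tau / hbar}, and
   rho'_mm rho'_nn is the corresponding fourfold series.  Since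
   |rho_kl|^2 <= rho_kk rho_ll and sum_k |U_nk|^2 = 1, these series are
   dominated, uniformly in tau, by convergent series of nonnegative terms, so
   their square truncations converge uniformly and the time average passes to
   the limit.  The average of a finite sum of oscillations keeps exactly its
   zero-frequency terms: by (A) these are the terms k = l, and for the product
   (A) and (B) leave only k = l, k' = l' (giving mu_m mu_n) and k = l', l = k'
   with k <> l (giving nu_mn). *)

From Stdlib Require Import Reals Lia Lra Psatz.
From Stdlib Require Import FunctionalExtensionality ClassicalEpsilon.
From Coquelicot Require Import Coquelicot.
Open Scope R_scope.

(** * Finite sums *)

(* [sumR f N] and [sumC f N] have the N terms f 0, ..., f (N-1), unlike
   Coquelicot's [sum_n], which has N+1. *)
Fixpoint sumR (f : nat -> R) (N : nat) : R :=
  match N with O => 0 | S n => sumR f n + f n end.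
Fixpoint sumC (f : nat -> C) (N : nat) : C :=
  match N with O => RtoC 0 | S n => (sumC f n + f n)%C end.

Lemma sumR_ext f g N : (forall k, (k < N)%nat -> f k = g k) -> sumR f N = sumR g N.
Proof. induction N as [|N IH]; intros H; simpl; [|rewrite IH, H]; auto. Qed.

Lemma sumC_ext f g N : (forall k, (k < N)%nat -> f k = g k) -> sumC f N = sumC g N.
Proof. induction N as [|N IH]; intros H; simpl; [|rewrite IH, H]; auto. Qed.

Lemma sumR_plus f g N : sumR (fun k => f k + g k) N = sumR f N + sumR g N.
Proof. induction N as [|N IH]; simpl; [|rewrite IH]; ring. Qed.

Lemma sumC_plus f g N : sumC (fun k => f k + g k)%C N = (sumC f N + sumC g N)%C.
Proof. induction N as [|N IH]; simpl; [|rewrite IH]; ring. Qed.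

Lemma sumR_minus f g N : sumR (fun k => f k - g k) N = sumR f N - sumR g N.
Proof. induction N as [|N IH]; simpl; [|rewrite IH]; ring. Qed.

Lemma sumR_scal c f N : sumR (fun k => c * f k) N = c * sumR f N.
Proof. induction N as [|N IH]; simpl; [|rewrite IH]; ring. Qed.

Lemma sumC_scal c f N : sumC (fun k => c * f k)%C N = (c * sumC f N)%C.
Proof. induction N as [|N IH]; simpl; [|rewrite IH]; ring. Qed.

Lemma sumR_mul f g M N :
  sumR (fun k => sumR (fun l => f k * g l) N) M = sumR f M * sumR g N.
Proof. induction M as [|M IH]; simpl; [|rewrite IH, sumR_scal]; ring. Qed.

Lemma sumC_mul f g M N :
  sumC (fun k => sumC (fun l => f k * g l)%C N) M = (sumC f M * sumC g N)%C.
Proof. induction M as [|M IH]; simpl; [|rewrite IH, sumC_scal]; ring. Qed.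

Lemma sumC_delta f k N :
  sumC (fun l => if Nat.eqb l k then f l else RtoC 0) N =
  if Nat.ltb k N then f k else RtoC 0.
Proof.
  induction N as [|N IH]; simpl; auto. rewrite IH.
  destruct (Nat.eqb_spec N k), (Nat.ltb_spec k N), (Nat.ltb_spec k (S N));
    subst; try lia; ring.
Qed.

Lemma Re_sumC f N : Re (sumC f N) = sumR (fun k => Re (f k)) N.
Proof. induction N as [|N IH]; simpl; [|rewrite <- IH]; reflexivity. Qed.

Lemma Im_sumC f N : Im (sumC f N) = sumR (fun k => Im (f k)) N.
Proof. induction N as [|N IH]; simpl; [|rewrite <- IH]; reflexivity. Qed.

Lemma sum_n_sumR f N : sum_n f N = sumR f (S N).
Proof.
  induction N as [|N IH].
  - rewrite sum_O; simpl; symmetry; apply Rplus_0_l.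
  - rewrite sum_Sn, IH; reflexivity.
Qed.

Lemma sum_n_sumC f N : sum_n (G := C_AbelianMonoid) f N = sumC f (S N).
Proof.
  induction N as [|N IH].
  - rewrite sum_O; simpl; symmetry; apply Cplus_0_l.
  - rewrite sum_Sn, IH; reflexivity.
Qed.

Lemma sumR_le f g N : (forall k, (k < N)%nat -> f k <= g k) -> sumR f N <= sumR g N.
Proof.
  induction N as [|N IH]; intros H; simpl; [lra|].
  pose proof (IH (fun k hk => H k ltac:(lia))). pose proof (H N ltac:(lia)). lra.
Qed.

Lemma sumR_ge0 f N : (forall k, 0 <= f k) -> 0 <= sumR f N.
Proof. intros H; induction N as [|N IH]; simpl; [lra|]. specialize (H N); lra. Qed.

Lemma sumR_le_sumR f M N : (forall k, 0 <= f k) -> (M <= N)%nat -> sumR f M <= sumR f N.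
Proof. intros H HMN; induction HMN; simpl; [lra|]. specialize (H m); lra. Qed.

Lemma le_sumR f k N : (forall k, 0 <= f k) -> (k < N)%nat -> f k <= sumR f N.
Proof.
  intros H HkN; induction HkN; simpl.
  - pose proof (sumR_ge0 f k H); lra.
  - specialize (H m); lra.
Qed.

Lemma Rabs_sumR f N : Rabs (sumR f N) <= sumR (fun k => Rabs (f k)) N.
Proof.
  induction N as [|N IH]; simpl.
  - rewrite Rabs_R0; lra.
  - eapply Rle_trans; [apply Rabs_triang|]; lra.
Qed.

Lemma Cmod_sumC f N : Cmod (sumC f N) <= sumR (fun k => Cmod (f k)) N.
Proof.
  induction N as [|N IH]; simpl.
  - rewrite Cmod_0; lra.
  - eapply Rle_trans; [apply Cmod_triangle|]; lra.
Qed.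

Lemma Cmod_sumC_le f g N : (forall k, Cmod (f k) <= g k) -> Cmod (sumC f N) <= sumR g N.
Proof. intros H. eapply Rle_trans; [apply Cmod_sumC|]. apply sumR_le; auto. Qed.

Lemma is_lim_seq_sumR (f : nat -> nat -> R) (l : nat -> R) K :
  (forall k, is_lim_seq (fun L => f L k) (l k)) ->
  is_lim_seq (fun L => sumR (f L) K) (sumR l K).
Proof.
  intros H; induction K as [|K IH]; simpl.
  - apply is_lim_seq_const.
  - apply is_lim_seq_plus'; auto.
Qed.

(** * Series and double series *)

Lemma is_series_iff_sumR (a : nat -> R) l : is_series a l <-> is_lim_seq (sumR a) l.
Proof.
  split; intros H.
  - apply is_lim_seq_incr_1, (is_lim_seq_ext (sum_n a)); [apply sum_n_sumR | exact H].
  - apply is_lim_seq_incr_1 in H.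
    apply (is_lim_seq_ext _ (sum_n a)) in H; [exact H|].
    intros N; symmetry; apply sum_n_sumR.
Qed.

Lemma is_lim_seq_sumR_Series a : ex_series a -> is_lim_seq (sumR a) (Series a).
Proof. intros H. apply is_series_iff_sumR, Series_correct, H. Qed.

Lemma is_lim_seq_close (u : nat -> R) (l : R) eps : is_lim_seq u l -> 0 < eps ->
  exists N0, forall N, (N0 <= N)%nat -> Rabs (u N - l) < eps.
Proof.
  intros H Heps. apply is_lim_seq_spec in H.
  destruct (H (mkposreal eps Heps)) as [N0 HN0]. exists N0; intros N HN; apply HN0, HN.
Qed.

Lemma ex_series_bounded_ge0 (a : nat -> R) B :
  (forall k, 0 <= a k) -> (forall N, sumR a N <= B) -> ex_series a /\ Series a <= B.
Proof.
  intros Ha HB.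
  destruct (ex_finite_lim_seq_incr (sumR a) B) as [l Hl]; auto.
  { intros N; simpl; specialize (Ha N); lra. }
  assert (Hs : is_series a l) by (apply is_series_iff_sumR, Hl).
  split; [exists l; exact Hs|].
  rewrite (is_series_unique _ _ Hs).
  apply (is_lim_seq_le _ _ l B HB Hl (is_lim_seq_const B)).
Qed.

Lemma sumR_le_Series a N : (forall k, 0 <= a k) -> ex_series a -> sumR a N <= Series a.
Proof.
  intros Ha He.
  apply (is_lim_seq_le_loc (fun _ => sumR a N) (sumR a) (sumR a N) (Series a)).
  - exists N. intros M HM. apply sumR_le_sumR; auto.
  - apply is_lim_seq_const.
  - apply is_lim_seq_sumR_Series, He.
Qed.

Lemma Series_ge0 a : (forall k, 0 <= a k) -> ex_series a -> 0 <= Series a.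
Proof. intros Ha He. exact (sumR_le_Series a 0 Ha He). Qed.

Lemma Series_zero : Series (fun _ => 0) = 0.
Proof.
  rewrite <- (Series_ext (fun _ => 0 * 0)) by (intros; ring).
  rewrite Series_scal_l; ring.
Qed.

Lemma Series_tail_le (a b : nat -> R) N :
  (forall k, Rabs (a k) <= b k) -> ex_series b ->
  ex_series a /\ Rabs (Series a - sumR a N) <= Series b - sumR b N.
Proof.
  intros Hab Hb.
  assert (Ha : ex_series a) by (apply (ex_series_le (V := R_CompleteNormedModule) a b); auto).
  split; [exact Ha|].
  apply (is_lim_seq_le_loc (fun M => Rabs (sumR a M - sumR a N))
           (fun M => sumR b M - sumR b N) (Rabs (Series a - sumR a N))
           (Series b - sumR b N)).
  - exists N. intros M HM. induction HM.
    + rewrite Rminus_diag, Rabs_R0; lra.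
    + simpl. replace (sumR a m + a m - sumR a N) with ((sumR a m - sumR a N) + a m) by ring.
      eapply Rle_trans; [apply Rabs_triang|]. specialize (Hab m). lra.
  - apply (is_lim_seq_abs _ (Finite (Series a - sumR a N))).
    apply is_lim_seq_minus'; [apply is_lim_seq_sumR_Series, Ha | apply is_lim_seq_const].
  - apply is_lim_seq_minus'; [apply is_lim_seq_sumR_Series, Hb | apply is_lim_seq_const].
Qed.

Section DoubleSeries.
Variables (b : nat -> nat -> R) (B : R).
Hypothesis b_ge0 : forall k l, 0 <= b k l.
Hypothesis b_square_sums : forall N, sumR (fun k => sumR (b k) N) N <= B.

Lemma ex_series_row k : ex_series (b k).
Proof.
  apply (ex_series_bounded_ge0 _ B); auto.
  intros L. set (M := max (S k) L).
  eapply Rle_trans; [|apply (b_square_sums M)].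
  eapply Rle_trans; [apply (sumR_le_sumR (b k) L M); auto; lia|].
  apply (le_sumR (fun k => sumR (b k) M)); [intros; apply sumR_ge0; auto | lia].
Qed.

Lemma ex_series_row_Series : ex_series (fun k => Series (b k)).
Proof.
  apply (ex_series_bounded_ge0 _ B).
  { intros k; apply Series_ge0; auto; apply ex_series_row. }
  intros K.
  apply (is_lim_seq_le (fun L => sumR (fun k => sumR (b k) L) K) (fun _ => B)
           (sumR (fun k => Series (b k)) K) B).
  - intros L. set (M := max K L).
    eapply Rle_trans; [|apply (b_square_sums M)].
    eapply Rle_trans.
    { apply sumR_le. intros k _. apply (sumR_le_sumR (b k) L M); auto; lia. }
    apply sumR_le_sumR; [intros; apply sumR_ge0; auto | lia].
  - apply is_lim_seq_sumR. intros k; apply is_lim_seq_sumR_Series, ex_series_row.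
  - apply is_lim_seq_const.
Qed.

Lemma Series_Series_square_sums_unif eps : 0 < eps -> exists N0,
  forall G : nat -> nat -> R, (forall k l, Rabs (G k l) <= b k l) ->
  forall N, (N0 <= N)%nat ->
  Rabs (Series (fun k => Series (G k)) - sumR (fun k => sumR (G k) N) N) <= eps.
Proof.
  intros Heps.
  set (beta := fun k => Series (b k)).
  destruct (is_lim_seq_close _ _ (eps / 2)
              (is_lim_seq_sumR_Series _ ex_series_row_Series) ltac:(lra)) as [K HK].
  specialize (HK K (le_n K)).
  destruct (is_lim_seq_close _ _ (eps / 2)
              (is_lim_seq_sumR (fun L k => sumR (b k) L) beta K
                 (fun k => is_lim_seq_sumR_Series _ (ex_series_row k))) ltac:(lra))
    as [L HL].
  specialize (HL L (le_n L)).
  exists (max K L). intros G HG N HN.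
  assert (Hrow : forall k, Rabs (Series (G k) - sumR (G k) N) <= beta k - sumR (b k) N)
    by (intros k; apply Series_tail_le; auto; apply ex_series_row).
  assert (Hcol : forall k, Rabs (Series (G k)) <= beta k).
  { intros k. destruct (Series_tail_le (G k) (b k) 0 (HG k) (ex_series_row k)) as [_ H].
    simpl in H. rewrite !Rminus_0_r in H; exact H. }
  destruct (Series_tail_le (fun k => Series (G k)) beta N Hcol ex_series_row_Series)
    as [_ Hout].
  assert (Hin : Rabs (sumR (fun k => Series (G k)) N - sumR (fun k => sumR (G k) N) N)
                <= sumR beta N - sumR (fun k => sumR (b k) N) N).
  { rewrite <- !sumR_minus. eapply Rle_trans; [apply Rabs_sumR|].
    apply sumR_le. intros k _. apply Hrow. }
  assert (Hmono : sumR (fun k => sumR (b k) L) K <= sumR (fun k => sumR (b k) N) N).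
  { eapply Rle_trans.
    - apply sumR_le. intros k _. apply (sumR_le_sumR (b k) L N); auto; lia.
    - apply sumR_le_sumR; [intros; apply sumR_ge0; auto | lia]. }
  replace (Series (fun k => Series (G k)) - sumR (fun k => sumR (G k) N) N) with
    ((Series (fun k => Series (G k)) - sumR (fun k => Series (G k)) N) +
     (sumR (fun k => Series (G k)) N - sumR (fun k => sumR (G k) N) N)) by ring.
  eapply Rle_trans; [apply Rabs_triang|].
  apply Rabs_def2 in HK. apply Rabs_def2 in HL. fold beta in HK. lra.
Qed.

End DoubleSeries.

Definition SeriesC (f : nat -> C) : C :=
  (Series (fun k => Re (f k)), Series (fun k => Im (f k))).

Lemma Im_le_Cmod (z : C) : Rabs (Im z) <= Cmod z.
Proof. eapply Rle_trans; [|apply Rmax_Cmod]. apply Rmax_r. Qed.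

Lemma Cmod_le_Re_Im (z : C) : Cmod z <= Rabs (Re z) + Rabs (Im z).
Proof.
  assert (Hz : z = (RtoC (Re z) + Ci * RtoC (Im z))%C)
    by (apply injective_projections; unfold Re, Im; simpl; ring).
  rewrite Hz at 1. eapply Rle_trans; [apply Cmod_triangle|].
  rewrite Cmod_mult, !Cmod_R, Cmod_Ci. lra.
Qed.

Lemma SeriesC_sumC_close (h : nat -> C) :
  ex_series (fun k => Re (h k)) -> ex_series (fun k => Im (h k)) ->
  forall eps, 0 < eps -> exists N0, forall N, (N0 <= N)%nat ->
  Cmod (SeriesC h - sumC h N) <= eps.
Proof.
  intros HRe HIm eps Heps.
  destruct (is_lim_seq_close _ _ (eps / 2) (is_lim_seq_sumR_Series _ HRe) ltac:(lra))
    as [N1 HN1].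
  destruct (is_lim_seq_close _ _ (eps / 2) (is_lim_seq_sumR_Series _ HIm) ltac:(lra))
    as [N2 HN2].
  exists (max N1 N2). intros N HN.
  specialize (HN1 N ltac:(lia)). specialize (HN2 N ltac:(lia)).
  rewrite Rabs_minus_sym, <- Re_sumC in HN1. rewrite Rabs_minus_sym, <- Im_sumC in HN2.
  eapply Rle_trans; [apply Cmod_le_Re_Im|]. simpl. unfold Re, Im, Rminus in *. lra.
Qed.

Lemma SeriesC_SeriesC_square_sums_unif (b : nat -> nat -> R) B :
  (forall k l, 0 <= b k l) -> (forall N, sumR (fun k => sumR (b k) N) N <= B) ->
  forall eps, 0 < eps -> exists N0,
  forall G : nat -> nat -> C, (forall k l, Cmod (G k l) <= b k l) ->
  forall N, (N0 <= N)%nat ->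
  Cmod (SeriesC (fun k => SeriesC (G k)) - sumC (fun k => sumC (G k) N) N) <= eps.
Proof.
  intros Hb HB eps Heps.
  destruct (Series_Series_square_sums_unif b B Hb HB (eps / 2) ltac:(lra)) as [N0 HN0].
  exists N0. intros G HG N HN.
  pose proof (HN0 (fun k l => Re (G k l))
                (fun k l => Rle_trans _ _ _ (re_le_Cmod _) (HG k l)) N HN) as HRe.
  pose proof (HN0 (fun k l => Im (G k l))
                (fun k l => Rle_trans _ _ _ (Im_le_Cmod _) (HG k l)) N HN) as HIm.
  eapply Rle_trans; [apply Cmod_le_Re_Im|].
  simpl. rewrite Re_sumC, Im_sumC.
  rewrite (sumR_ext _ (fun k => sumR (fun l => Re (G k l)) N))
    by (intros; apply Re_sumC).
  rewrite (sumR_ext (fun k => Im _) (fun k => sumR (fun l => Im (G k l)) N))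
    by (intros; apply Im_sumC).
  unfold Rminus in *. lra.
Qed.

(** * Time averages *)

Lemma time_avg_is_R_ext f g a :
  (forall t, f t = g t) -> time_avg_is_R f a -> time_avg_is_R g a.
Proof. intros H. replace g with f; auto. apply functional_extensionality; auto. Qed.

Lemma time_avg_is_R_plus f g a b :
  time_avg_is_R f a -> time_avg_is_R g b -> time_avg_is_R (fun t => f t + g t) (a + b).
Proof.
  intros [If Lf] [Ig Lg]. split.
  - intros T HT. apply (ex_RInt_plus f g); auto.
  - apply (is_lim_ext_loc (fun T => RInt f 0 T / T + RInt g 0 T / T)).
    + exists 0. intros T HT. rewrite (RInt_plus f g) by auto.
      change (RInt f 0 T / T + RInt g 0 T / T = (RInt f 0 T + RInt g 0 T) / T).
      field; lra.
    + apply is_lim_plus'; auto.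
Qed.

Lemma time_avg_is_R_scal c f a :
  time_avg_is_R f a -> time_avg_is_R (fun t => c * f t) (c * a).
Proof.
  intros [If Lf]. split.
  - intros T HT. apply (ex_RInt_scal f 0 T c); auto.
  - apply (is_lim_ext_loc (fun T => c * (RInt f 0 T / T))).
    + exists 0. intros T HT.
      replace (RInt (fun t => c * f t) 0 T) with (c * RInt f 0 T)
        by (symmetry; apply (RInt_scal f 0 T c); auto).
      field; lra.
    + apply (is_lim_scal_l _ c p_infty a); auto.
Qed.

Lemma time_avg_is_R_const c : time_avg_is_R (fun _ => c) c.
Proof.
  split; [intros; apply ex_RInt_const|].
  apply (is_lim_ext_loc (fun _ => c)); [|apply is_lim_const].
  exists 0. intros T HT. rewrite RInt_const. change (c = (T - 0) * c / T). field; lra.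
Qed.

Lemma time_avg_is_R_bounded_RInt f K :
  (forall T, 0 < T -> ex_RInt f 0 T) -> (forall T, 0 < T -> Rabs (RInt f 0 T) <= K) ->
  time_avg_is_R f 0.
Proof.
  intros If HK. split; auto.
  apply is_lim_spec. intros eps. simpl.
  pose proof (cond_pos eps) as Heps.
  assert (HK0 : 0 <= K) by (specialize (HK 1 ltac:(lra)); pose proof (Rabs_pos (RInt f 0 1)); lra).
  assert (HKe : 0 <= K / eps) by (apply Rdiv_le_0_compat; lra).
  exists (K / eps + 1). intros T HT.
  assert (HT0 : 0 < T) by lra.
  specialize (HK T HT0).
  rewrite Rminus_0_r. unfold Rdiv. rewrite Rabs_mult, Rabs_inv, (Rabs_pos_eq T) by lra.
  apply (Rmult_lt_reg_r T); [lra|]. rewrite Rmult_assoc, Rinv_l by lra.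
  assert (K / eps * eps = K) by (field; lra). nra.
Qed.

Lemma time_avg_is_R_bounded_primitive f P K :
  (forall t, is_derive P t (f t)) -> (forall t, continuous f t) ->
  (forall t, Rabs (P t) <= K) -> time_avg_is_R f 0.
Proof.
  intros HP Hf HK.
  assert (HI : forall T, is_RInt f 0 T (P T - P 0))
    by (intros T; apply (is_RInt_derive P f); auto).
  apply (time_avg_is_R_bounded_RInt f (2 * K)).
  - intros T _. eexists; apply HI.
  - intros T _. rewrite (is_RInt_unique _ _ _ _ (HI T)).
    eapply Rle_trans; [apply Rabs_triang|]. rewrite Rabs_Ropp.
    pose proof (HK T); pose proof (HK 0); lra.
Qed.

Lemma time_avg_is_R_cos w : w <> 0 -> time_avg_is_R (fun t => cos (w * t)) 0.
Proof.
  intros Hw.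
  apply (time_avg_is_R_bounded_primitive _ (fun t => sin (w * t) / w) (/ Rabs w)).
  - intros t. auto_derive; [auto | field; auto].
  - intros t. apply ex_derive_continuous. auto_derive; auto.
  - intros t. unfold Rdiv. rewrite Rabs_mult, Rabs_inv.
    pose proof (Rinv_0_lt_compat _ (Rabs_pos_lt w Hw)).
    pose proof (Rabs_le (sin (w * t)) 1 (SIN_bound (w * t))). nra.
Qed.

Lemma time_avg_is_R_sin w : w <> 0 -> time_avg_is_R (fun t => sin (w * t)) 0.
Proof.
  intros Hw.
  apply (time_avg_is_R_bounded_primitive _ (fun t => - cos (w * t) / w) (/ Rabs w)).
  - intros t. auto_derive; [auto | field; auto].
  - intros t. apply ex_derive_continuous. auto_derive; auto.
  - intros t. unfold Rdiv. rewrite Rabs_mult, Rabs_inv, Rabs_Ropp.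
    pose proof (Rinv_0_lt_compat _ (Rabs_pos_lt w Hw)).
    pose proof (Rabs_le (cos (w * t)) 1 (COS_bound (w * t))). nra.
Qed.

Lemma ex_RInt_uniform_approx f a b :
  (forall eps, 0 < eps -> exists g, ex_RInt g a b /\ forall t, Rabs (f t - g t) <= eps) ->
  ex_RInt f a b.
Proof.
  intros H.
  assert (Hs : forall n : nat, { g : R -> R | ex_RInt g a b /\
                                  forall t, Rabs (f t - g t) <= / (INR n + 1) }).
  { intros n. apply constructive_indefinite_description, H.
    apply Rinv_0_lt_compat. pose proof (pos_INR n); lra. }
  set (gs := fun n => proj1_sig (Hs n)).
  destruct (filterlim_RInt gs a b eventually eventually_filter f
              (fun n => RInt (gs n) a b)) as [l [_ Hl]].
  - intros n. apply RInt_correct, (proj1 (proj2_sig (Hs n))).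
  - apply filterlim_locally. intros eps.
    destruct (INR_archimed eps 1 (cond_pos eps)) as [n0 Hn0].
    exists n0. intros n Hn t. change (Rabs (gs n t - f t) < eps).
    rewrite Rabs_minus_sym. eapply Rle_lt_trans; [apply (proj2 (proj2_sig (Hs n)))|].
    assert (INR n0 <= INR n) by (apply le_INR; auto).
    pose proof (pos_INR n0). pose proof (cond_pos eps).
    apply (Rmult_lt_reg_r (INR n + 1)); [lra|]. rewrite Rinv_l by lra. nra.
  - exists l; exact Hl.
Qed.

Lemma time_avg_is_R_uniform_approx f a :
  (forall eps, 0 < eps -> exists g c, time_avg_is_R g c /\
     (forall t, Rabs (f t - g t) <= eps) /\ Rabs (a - c) <= eps) ->
  time_avg_is_R f a.
Proof.
  intros H.
  assert (If : forall T, 0 < T -> ex_RInt f 0 T).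
  { intros T HT. apply ex_RInt_uniform_approx. intros eps Heps.
    destruct (H eps Heps) as (g & c & [Ig _] & Hfg & _). exists g; auto. }
  split; auto.
  apply is_lim_spec. intros eps. simpl. pose proof (cond_pos eps) as Heps.
  destruct (H (eps / 4)) as (g & c & [Ig Lg] & Hfg & Hac); [lra|].
  apply is_lim_spec in Lg. destruct (Lg (mkposreal (eps / 4) ltac:(lra))) as [M HM].
  exists (Rmax M 1). intros T HT.
  pose proof (Rmax_l M 1); pose proof (Rmax_r M 1).
  assert (HT0 : 0 < T) by lra.
  specialize (HM T ltac:(lra)). simpl in HM.
  assert (Hd : Rabs (RInt f 0 T - RInt g 0 T) <= (T - 0) * (eps / 4)).
  { rewrite <- (RInt_minus f g) by auto.
    apply abs_RInt_le_const; [lra | apply ex_RInt_minus; auto | intros; apply Hfg]. }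
  assert (Hd' : Rabs ((RInt f 0 T - RInt g 0 T) / T) <= eps / 4).
  { unfold Rdiv. rewrite Rabs_mult, Rabs_inv, (Rabs_pos_eq T) by lra.
    apply (Rmult_le_reg_r T); [lra|]. rewrite Rmult_assoc, Rinv_l by lra. nra. }
  replace (RInt f 0 T / T - a)
    with ((RInt f 0 T - RInt g 0 T) / T + (RInt g 0 T / T - c) + (c - a)) by (field; lra).
  rewrite Rabs_minus_sym in Hac.
  pose proof (Rabs_triang ((RInt f 0 T - RInt g 0 T) / T + (RInt g 0 T / T - c)) (c - a)).
  pose proof (Rabs_triang ((RInt f 0 T - RInt g 0 T) / T) (RInt g 0 T / T - c)).
  lra.
Qed.

Lemma time_avg_is_ext F G a :
  (forall t, F t = G t) -> time_avg_is F a -> time_avg_is G a.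
Proof. intros H. replace G with F; auto. apply functional_extensionality; auto. Qed.

Lemma time_avg_is_plus F G a b :
  time_avg_is F a -> time_avg_is G b -> time_avg_is (fun t => F t + G t)%C (a + b)%C.
Proof.
  intros [ReF ImF] [ReG ImG]. split.
  - apply (time_avg_is_R_plus (fun t => Re (F t)) (fun t => Re (G t))); auto.
  - apply (time_avg_is_R_plus (fun t => Im (F t)) (fun t => Im (G t))); auto.
Qed.

Lemma time_avg_is_scal c F a :
  time_avg_is F a -> time_avg_is (fun t => c * F t)%C (c * a)%C.
Proof.
  intros [ReF ImF]. split; simpl.
  - apply (time_avg_is_R_ext (fun t => Re c * Re (F t) + (- Im c) * Im (F t)));
      [intros; unfold Re, Im; simpl; ring|].
    replace (fst c * fst a - snd c * snd a) with (Re c * Re a + (- Im c) * Im a)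
      by (unfold Re, Im; ring).
    apply time_avg_is_R_plus; apply time_avg_is_R_scal; auto.
  - apply (time_avg_is_R_ext (fun t => Re c * Im (F t) + Im c * Re (F t)));
      [intros; unfold Re, Im; simpl; ring|].
    replace (fst c * snd a + snd c * fst a) with (Re c * Im a + Im c * Re a)
      by (unfold Re, Im; ring).
    apply time_avg_is_R_plus; apply time_avg_is_R_scal; auto.
Qed.

Lemma time_avg_is_const c : time_avg_is (fun _ => c) c.
Proof. split; apply time_avg_is_R_const. Qed.

Lemma time_avg_is_sumC (F : nat -> R -> C) a N :
  (forall k, time_avg_is (F k) (a k)) ->
  time_avg_is (fun t => sumC (fun k => F k t) N) (sumC a N).
Proof.
  intros H. induction N as [|N IH]; simpl.
  - apply time_avg_is_const.
  - apply (time_avg_is_plus (fun t => sumC (fun k => F k t) N) (F N)); auto.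
Qed.

Lemma Cmod_cexpi x : Cmod (cexpi x) = 1.
Proof.
  pose proof (sin2_cos2 x). unfold Rsqr in *.
  unfold Cmod, cexpi. rewrite <- sqrt_1. f_equal. simpl. lra.
Qed.

Lemma cexpi_plus x y : (cexpi x * cexpi y)%C = cexpi (x + y).
Proof.
  unfold cexpi. rewrite cos_plus, sin_plus.
  apply injective_projections; simpl; ring.
Qed.

Lemma time_avg_is_scal_cexpi (z : C) w :
  time_avg_is (fun t => z * cexpi (w * t))%C (if Req_dec_T w 0 then z else RtoC 0).
Proof.
  destruct (Req_dec_T w 0) as [->|Hw].
  - apply (time_avg_is_ext (fun _ => z)); [|apply time_avg_is_const].
    intros t. rewrite Rmult_0_l. unfold cexpi. rewrite cos_0, sin_0.
    apply injective_projections; simpl; ring.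
  - replace (RtoC 0) with (z * RtoC 0)%C by ring.
    apply time_avg_is_scal. split; [apply time_avg_is_R_cos | apply time_avg_is_R_sin]; auto.
Qed.

Lemma time_avg_is_uniform_approx (F : R -> C) (a : C) :
  (forall eps, 0 < eps -> exists G c, time_avg_is G c /\
     (forall t, Cmod (F t - G t) <= eps) /\ Cmod (a - c) <= eps) ->
  time_avg_is F a.
Proof.
  intros H. split; apply time_avg_is_R_uniform_approx; intros eps Heps;
    destruct (H eps Heps) as (G & c & [ReG ImG] & HFG & Hac).
  - exists (fun t => Re (G t)), (Re c). split; [exact ReG|split].
    + intros t. exact (Rle_trans _ _ _ (re_le_Cmod (F t - G t)) (HFG t)).
    + exact (Rle_trans _ _ _ (re_le_Cmod (a - c)) Hac).
  - exists (fun t => Im (G t)), (Im c). split; [exact ImG|split].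
    + intros t. exact (Rle_trans _ _ _ (Im_le_Cmod (F t - G t)) (HFG t)).
    + exact (Rle_trans _ _ _ (Im_le_Cmod (a - c)) Hac).
Qed.

Lemma time_avg_is_uniform_lim (F : R -> C) (a : C) (Fn : nat -> R -> C) (an : nat -> C) :
  (forall N, time_avg_is (Fn N) (an N)) ->
  (forall eps, 0 < eps -> exists N0, forall N, (N0 <= N)%nat ->
     (forall t, Cmod (F t - Fn N t) <= eps) /\ Cmod (a - an N) <= eps) ->
  time_avg_is F a.
Proof.
  intros Havg Hlim. apply time_avg_is_uniform_approx. intros eps Heps.
  destruct (Hlim eps Heps) as [N0 HN0]. exists (Fn N0), (an N0). auto.
Qed.

(** * Density and unitary matrices *)

Lemma has_csum_Re_Im D f l : has_csum D f l ->
  is_series (fun k => Re (mask D f k)) (Re l) /\ is_series (fun k => Im (mask D f k)) (Im l).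
Proof.
  intros H. unfold has_csum, is_series in H.
  pose proof (proj1 (@filterlim_locally nat (NormedModule.UniformSpace C_AbsRing C_NormedModule)
                       eventually _ _ _) H) as Hball; clear H.
  split; apply filterlim_locally; intros eps; destruct (Hball eps) as [N0 HN0];
    exists N0; intros N HN; destruct (HN0 N HN) as [HRe HIm];
    rewrite sum_n_sumR; rewrite sum_n_sumC in HRe, HIm.
  - rewrite Re_sumC in HRe; exact HRe.
  - rewrite Im_sumC in HIm; exact HIm.
Qed.

Lemma nonneg_quadratic_discr a b c : 0 <= c ->
  (forall x, 0 <= a + 2 * b * x + c * x ^ 2) -> b ^ 2 <= a * c.
Proof.
  intros Hc H. pose proof (H 0) as Ha.
  destruct (Rle_lt_or_eq_dec 0 c Hc) as [Hc0 | <-].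
  - specialize (H (- b / c)).
    replace (a + 2 * b * (- b / c) + c * (- b / c) ^ 2) with ((a * c - b ^ 2) / c) in H
      by (field; lra).
    apply (Rmult_le_compat_r c) in H; [|lra].
    unfold Rdiv in H. rewrite Rmult_assoc, Rinv_l, Rmult_0_l in H by lra. lra.
  - destruct (Req_dec b 0) as [-> | Hb]; [lra|].
    specialize (H (- (a + 1) / (2 * b))).
    replace (a + 2 * b * (- (a + 1) / (2 * b)) + 0 * (- (a + 1) / (2 * b)) ^ 2) with (-1)
      in H by (field; auto). lra.
Qed.

Section FiniteSupport.
Variables (D : option nat) (N : nat) (f : nat -> C).

Lemma fsum_support1 k : inI D k -> (k <= N)%nat ->
  (forall j, j <> k -> f j = RtoC 0) -> fsum D N f = f k.
Proof.
  intros Hk HkN Hf. unfold fsum. rewrite sum_n_sumC.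
  rewrite (sumC_ext _ (fun j => if Nat.eqb j k then f j else RtoC 0)).
  - rewrite sumC_delta. destruct (Nat.ltb_spec k (S N)); [reflexivity | lia].
  - intros j _. unfold mask. destruct (Nat.eqb_spec j k) as [-> | Hj].
    + rewrite Hk; reflexivity.
    + rewrite (Hf j Hj). destruct (inIb D j); reflexivity.
Qed.

Lemma fsum_support2 k l : k <> l -> inI D k -> inI D l -> (k <= N)%nat -> (l <= N)%nat ->
  (forall j, j <> k -> j <> l -> f j = RtoC 0) -> fsum D N f = (f k + f l)%C.
Proof.
  intros Hkl Hk Hl HkN HlN Hf. unfold fsum. rewrite sum_n_sumC.
  rewrite (sumC_ext _ (fun j => (if Nat.eqb j k then f j else RtoC 0) +
                                (if Nat.eqb j l then f j else RtoC 0))%C).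
  - rewrite sumC_plus, !sumC_delta.
    destruct (Nat.ltb_spec k (S N)), (Nat.ltb_spec l (S N)); [reflexivity | lia..].
  - intros j _. unfold mask.
    destruct (Nat.eqb_spec j k) as [Hjk | Hjk], (Nat.eqb_spec j l) as [Hjl | Hjl].
    + lia.
    + subst j. rewrite Hk; ring.
    + subst j. rewrite Hl; ring.
    + rewrite (Hf j Hjk Hjl). destruct (inIb D j); ring.
Qed.

End FiniteSupport.

Lemma Cconj_RtoC (x : R) : Cconj (RtoC x) = RtoC x.
Proof. apply injective_projections; simpl; ring. Qed.

Section DensityMatrix.
Variables (D : option nat) (rho : nat -> nat -> C).
Hypothesis hrho : density_mx D rho.

Lemma density_diag_Im k : inI D k -> Im (rho k k) = 0.
Proof.
  intros Hk. destruct hrho as [Hh _]. specialize (Hh k k Hk Hk).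
  apply (f_equal snd) in Hh. unfold Im. simpl in Hh. lra.
Qed.

Lemma density_diag_Re_ge0 k : inI D k -> 0 <= Re (rho k k).
Proof.
  intros Hk. destruct hrho as [_ [Hpos _]].
  set (e := fun j => if Nat.eqb j k then RtoC 1 else RtoC 0).
  assert (He : forall j, j <> k -> e j = RtoC 0)
    by (intros j Hj; unfold e; destruct (Nat.eqb_spec j k); [contradiction | reflexivity]).
  assert (Hrow : forall i, fsum D k (fun l => Cconj (e i) * rho i l * e l)%C =
                          (Cconj (e i) * rho i k * e k)%C).
  { intros i. apply (fsum_support1 D k (fun l => Cconj (e i) * rho i l * e l)%C k Hk (le_n k)).
    intros j Hj. rewrite (He j Hj). ring. }
  specialize (Hpos k e).
  rewrite (fsum_support1 D k _ k Hk (le_n k)), Hrow in Hpos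
    by (intros j Hj; rewrite Hrow, (He j Hj), Cconj_RtoC; ring).
  unfold e in Hpos. rewrite Nat.eqb_refl in Hpos.
  unfold Re in *. simpl in Hpos. lra.
Qed.

Lemma density_qform_pair k l beta : k <> l -> inI D k -> inI D l ->
  0 <= Re (rho k k) + 2 * Cmod (rho k l) ^ 2 * beta
       + Cmod (rho k l) ^ 2 * Re (rho l l) * beta ^ 2.
Proof.
  intros Hkl Hk Hl. destruct hrho as [Hh [Hpos _]].
  set (c := (RtoC beta * Cconj (rho k l))%C).
  set (x := fun j => if Nat.eqb j k then RtoC 1 else if Nat.eqb j l then c else RtoC 0).
  assert (Hx : forall j, j <> k -> j <> l -> x j = RtoC 0).
  { intros j Hjk Hjl. unfold x.
    destruct (Nat.eqb_spec j k), (Nat.eqb_spec j l); [contradiction.. | reflexivity]. }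
  assert (Hxk : x k = RtoC 1) by (unfold x; rewrite Nat.eqb_refl; reflexivity).
  assert (Hxl : x l = c).
  { unfold x. destruct (Nat.eqb_spec l k); [lia|]. rewrite Nat.eqb_refl; reflexivity. }
  assert (Hrow : forall i, fsum D (max k l) (fun j => Cconj (x i) * rho i j * x j)%C =
                   (Cconj (x i) * rho i k * x k + Cconj (x i) * rho i l * x l)%C).
  { intros i.
    apply (fsum_support2 D _ (fun j => Cconj (x i) * rho i j * x j)%C k l); auto; try lia.
    intros j Hjk Hjl. rewrite (Hx j Hjk Hjl). ring. }
  specialize (Hpos (max k l) x).
  rewrite (fsum_support2 D _ _ k l), !Hrow in Hpos by (auto; try lia;
    intros j Hjk Hjl; rewrite Hrow, (Hx j Hjk Hjl), Cconj_RtoC; ring).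
  rewrite Hxk, Hxl, (Hh k l Hk Hl) in Hpos.
  pose proof (density_diag_Im l Hl) as HIl.
  unfold c in *. rewrite Cmod2_alt.
  unfold Re, Im in *. destruct (rho k l) as [p q], (rho k k) as [rk ik], (rho l l) as [rl il].
  simpl in *. subst il. nra.
Qed.

(* Nonnegativity of the quadratic form on x = e_k + beta conj(rho_kl) e_l. *)
Lemma density_offdiag_bound k l : inI D k -> inI D l ->
  Cmod (rho k l) ^ 2 <= Re (rho k k) * Re (rho l l).
Proof.
  intros Hk Hl. destruct (Nat.eq_dec k l) as [<- | Hkl].
  { rewrite Cmod2_alt, (density_diag_Im k Hk). lra. }
  set (s := Cmod (rho k l) ^ 2).
  assert (Hs : 0 <= s) by (apply pow_le, Cmod_ge_0).
  assert (Hq : forall beta, 0 <= Re (rho k k) + 2 * s * beta + s * Re (rho l l) * beta ^ 2)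
    by (intros beta; apply density_qform_pair; auto).
  pose proof (density_diag_Re_ge0 k Hk). pose proof (density_diag_Re_ge0 l Hl).
  apply nonneg_quadratic_discr in Hq; auto; [|nra].
  destruct (Rle_lt_or_eq_dec 0 s Hs) as [Hs0 | <-]; [apply (Rmult_le_reg_l s) |]; nra.
Qed.

End DensityMatrix.

Section Populations.
Variables (D : option nat) (rho : nat -> nat -> C).
Hypothesis hrho : density_mx D rho.

Definition pop k : R := Re (mask D (fun k => rho k k) k).

Lemma pop_ge0 k : 0 <= pop k.
Proof.
  unfold pop, mask. destruct (inIb D k) eqn:Hk; [apply (density_diag_Re_ge0 D); auto | simpl; lra].
Qed.

Lemma sumR_pop_le1 N : sumR pop N <= 1.
Proof.
  destruct hrho as [_ [_ Htr]].
  assert (Hs : is_series pop 1) by apply (has_csum_Re_Im _ _ _ Htr).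
  rewrite <- (is_series_unique _ _ Hs).
  apply sumR_le_Series; [apply pop_ge0 | eexists; exact Hs].
Qed.

Lemma ex_series_pop : ex_series pop.
Proof. apply (ex_series_bounded_ge0 pop 1); [apply pop_ge0 | apply sumR_pop_le1]. Qed.

Lemma Cmod2_le_pop k l : inI D k -> inI D l -> Cmod (rho k l) ^ 2 <= pop k * pop l.
Proof.
  intros Hk Hl. unfold pop, mask. rewrite Hk, Hl.
  apply (density_offdiag_bound D); auto.
Qed.

Lemma Cmod_diag_pop k : inI D k -> Cmod (rho k k) = pop k.
Proof.
  intros Hk. unfold pop, mask. rewrite Hk.
  assert (Hreal : rho k k = RtoC (Re (rho k k))).
  { apply injective_projections; [reflexivity | exact (density_diag_Im D rho hrho k Hk)]. }
  rewrite Hreal at 1. rewrite Cmod_R, Rabs_pos_eq; [reflexivity|].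
  apply (density_diag_Re_ge0 D); auto.
Qed.

End Populations.

Section UnitaryRows.
Variables (D : option nat) (U : nat -> nat -> C).
Hypothesis hU : unitary_mx D U.

Definition Uabs n k : R := if inIb D k then Cmod (U n k) else 0.

Lemma Uabs_ge0 n k : 0 <= Uabs n k.
Proof. unfold Uabs. destruct (inIb D k); [apply Cmod_ge_0 | lra]. Qed.

Lemma sumR_Uabs2_le1 n N : inI D n -> sumR (fun k => Uabs n k ^ 2) N <= 1.
Proof.
  intros Hn. destruct hU as [Hrows _].
  destruct (has_csum_Re_Im _ _ _ (Hrows n n Hn Hn)) as [Hs _].
  unfold delta in Hs. rewrite Nat.eqb_refl in Hs.
  assert (Hs' : is_series (fun k => Uabs n k ^ 2) 1).
  { eapply is_series_ext; [|exact Hs]. intros k. unfold mask, Uabs.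
    destruct (inIb D k); [rewrite Cmod2_alt; unfold Re, Im; simpl; ring | simpl; ring]. }
  rewrite <- (is_series_unique _ _ Hs').
  apply sumR_le_Series; [intros; apply pow_le, Uabs_ge0 | eexists; exact Hs'].
Qed.

Lemma Uabs_le1 n k : inI D n -> Uabs n k <= 1.
Proof.
  intros Hn.
  pose proof (le_sumR (fun k => Uabs n k ^ 2) k (S k)
                (fun j => pow_le _ 2 (Uabs_ge0 n j)) (Nat.lt_succ_diag_r k)).
  pose proof (sumR_Uabs2_le1 n (S k) Hn). pose proof (Uabs_ge0 n k). simpl in *. nra.
Qed.

End UnitaryRows.

Lemma mul_le_avg_of_sq_le x y z p q : 0 <= x -> 0 <= y -> 0 <= z -> 0 <= p -> 0 <= q ->
  z ^ 2 <= p * q -> x * y * z <= / 2 * (x ^ 2 * q) + / 2 * (p * y ^ 2).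
Proof.
  intros Hx Hy Hz Hp Hq Hzpq.
  assert (Hsq : (2 * (x * y * z)) ^ 2 <= (x ^ 2 * q + p * y ^ 2) ^ 2).
  { assert (x ^ 2 * y ^ 2 * z ^ 2 <= x ^ 2 * y ^ 2 * (p * q))
      by (apply Rmult_le_compat_l; [nra | exact Hzpq]).
    pose proof (pow2_ge_0 (x ^ 2 * q - p * y ^ 2)). nra. }
  assert (0 <= x * y * z) by (apply Rmult_le_pos; [apply Rmult_le_pos|]; auto).
  assert (0 <= x ^ 2 * q + p * y ^ 2) by nra.
  nra.
Qed.

(** * Time evolution of the populations *)

Lemma csum_csum D (g : nat -> nat -> C) :
  csum D (fun k => csum D (g k)) =
  SeriesC (fun k => SeriesC (fun l => if (inIb D k && inIb D l)%bool then g k l else RtoC 0)).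
Proof.
  unfold csum, SeriesC. f_equal; apply Series_ext; intros k; unfold mask at 1;
    destruct (inIb D k); simpl; try (symmetry; apply Series_zero);
    f_equal; apply Series_ext; intros l; unfold mask; destruct (inIb D l); reflexivity.
Qed.

Lemma Cmod_mul_sub_le (a b a' b' : C) e :
  Cmod a' <= 1 -> Cmod b' <= 1 -> Cmod (a - a') <= e -> Cmod (b - b') <= e -> e <= 1 ->
  Cmod (a * b - a' * b') <= 3 * e.
Proof.
  intros Ha' Hb' Ha Hb He.
  replace (a * b - a' * b')%C with (a * (b - b') + b' * (a - a'))%C by ring.
  eapply Rle_trans; [apply Cmod_triangle|]. rewrite !Cmod_mult.
  assert (Cmod a <= 2).
  { replace a with ((a - a') + a')%C by ring. eapply Rle_trans; [apply Cmod_triangle|]. lra. }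
  pose proof (Cmod_ge_0 a); pose proof (Cmod_ge_0 (b - b')); pose proof (Cmod_ge_0 b').
  pose proof (Cmod_ge_0 (a - a')). nra.
Qed.

Section Dynamics.
Variables (D : option nat) (E : nat -> R) (hbar : R) (U rho : nat -> nat -> C).
Hypothesis hA : nondegenerate D E.
Hypothesis hB : nondegenerate_gaps D E.
Hypothesis hrho : density_mx D rho.
Hypothesis hU : unitary_mx D U.
Hypothesis hhbar : 0 < hbar.

Definition coef n k l : C :=
  if (inIb D k && inIb D l)%bool then (U n k * Cconj (U n l) * rho k l)%C else RtoC 0.
Definition freq k l : R := - (E k - E l) / hbar.
Definition osc n k l t : C := (coef n k l * cexpi (freq k l * t))%C.
Definition coef_bound n k l : R :=
  if (inIb D k && inIb D l)%bool then Cmod (U n k) * Cmod (U n l) * Cmod (rho k l) else 0.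

Definition rhop_trunc n N t : C := sumC (fun k => sumC (fun l => osc n k l t) N) N.
Definition mu_trunc n N : C := sumC (fun k => coef n k k) N.

Lemma rhop_SeriesC n t :
  rhop D E hbar U rho n t = SeriesC (fun k => SeriesC (fun l => osc n k l t)).
Proof.
  unfold rhop. rewrite csum_csum. do 2 f_equal.
  apply functional_extensionality; intros k. do 2 f_equal.
  apply functional_extensionality; intros l. unfold osc, coef.
  destruct (inIb D k && inIb D l)%bool; [|ring].
  replace (- ((E k - E l) * t / hbar)) with (freq k l * t) by (unfold freq; field; lra).
  ring.
Qed.

Lemma coef_bound_ge0 n k l : 0 <= coef_bound n k l.
Proof.
  unfold coef_bound. destruct (inIb D k && inIb D l)%bool; [|lra].
  pose proof (Cmod_ge_0 (U n k)); pose proof (Cmod_ge_0 (U n l)).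
  pose proof (Cmod_ge_0 (rho k l)). repeat apply Rmult_le_pos; auto.
Qed.

Lemma Cmod_osc_le n k l t : Cmod (osc n k l t) <= coef_bound n k l.
Proof.
  unfold osc, coef, coef_bound. rewrite Cmod_mult, Cmod_cexpi, Rmult_1_r.
  destruct (inIb D k && inIb D l)%bool.
  - rewrite !Cmod_mult, Cmod_conj. lra.
  - rewrite Cmod_0; lra.
Qed.

Lemma coef_bound_le n k l : coef_bound n k l <=
  / 2 * (Uabs D U n k ^ 2 * pop D rho l) + / 2 * (pop D rho k * Uabs D U n l ^ 2).
Proof.
  pose proof (pop_ge0 D rho hrho k); pose proof (pop_ge0 D rho hrho l).
  pose proof (Uabs_ge0 D U n k); pose proof (Uabs_ge0 D U n l).
  unfold coef_bound. destruct (inIb D k) eqn:Hk, (inIb D l) eqn:Hl; simpl; try nra.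
  unfold Uabs. rewrite Hk, Hl.
  apply mul_le_avg_of_sq_le; try apply Cmod_ge_0; auto.
  apply Cmod2_le_pop; auto.
Qed.

(* AM-GM splits the bound into two products of convergent sums. *)
Lemma coef_bound_square_sums n N : inI D n ->
  sumR (fun k => sumR (coef_bound n k) N) N <= 1.
Proof.
  intros Hn.
  eapply Rle_trans.
  { apply sumR_le. intros k _. apply sumR_le. intros l _. apply coef_bound_le. }
  rewrite (sumR_ext _ (fun k => / 2 * sumR (fun l => Uabs D U n k ^ 2 * pop D rho l) N +
                                / 2 * sumR (fun l => pop D rho k * Uabs D U n l ^ 2) N))
    by (intros; rewrite sumR_plus, !sumR_scal; reflexivity).
  rewrite sumR_plus, !sumR_scal, !sumR_mul.
  pose proof (sumR_Uabs2_le1 D U hU n N Hn). pose proof (sumR_pop_le1 D rho hrho N).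
  pose proof (sumR_ge0 (fun k => Uabs D U n k ^ 2) N (fun k => pow_le _ 2 (Uabs_ge0 D U n k))).
  pose proof (sumR_ge0 _ N (pop_ge0 D rho hrho)).
  nra.
Qed.

Lemma rhop_trunc_close n : inI D n -> forall eps, 0 < eps -> exists N0,
  forall N, (N0 <= N)%nat -> forall t,
  Cmod (rhop D E hbar U rho n t - rhop_trunc n N t) <= eps.
Proof.
  intros Hn eps Heps.
  destruct (SeriesC_SeriesC_square_sums_unif (coef_bound n) 1 (coef_bound_ge0 n)
              (fun N => coef_bound_square_sums n N Hn) eps Heps) as [N0 HN0].
  exists N0. intros N HN t. rewrite rhop_SeriesC.
  apply (HN0 (fun k l => osc n k l t)); auto. intros; apply Cmod_osc_le.
Qed.

Lemma Cmod_rhop_trunc_le1 n N t : inI D n -> Cmod (rhop_trunc n N t) <= 1.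
Proof.
  intros Hn. eapply Rle_trans; [|apply (coef_bound_square_sums n N Hn)].
  apply Cmod_sumC_le. intros k. apply Cmod_sumC_le. intros l. apply Cmod_osc_le.
Qed.

Lemma time_avg_is_osc n k l :
  time_avg_is (osc n k l) (if Nat.eqb k l then coef n k k else RtoC 0).
Proof.
  pose proof (time_avg_is_scal_cexpi (coef n k l) (freq k l)) as H.
  destruct (Nat.eqb_spec k l) as [<- | Hkl].
  - destruct (Req_dec_T (freq k k) 0) as [_ | Hw]; [exact H|].
    exfalso. apply Hw. unfold freq. rewrite Rminus_diag. field. lra.
  - destruct (Req_dec_T (freq k l) 0) as [Hw | _]; [|exact H].
    unfold osc, coef in *. destruct (inIb D k) eqn:Hk, (inIb D l) eqn:Hl; try exact H.
    exfalso. apply Hkl, hA; auto.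
    unfold freq in Hw. apply (Rmult_eq_reg_r (/ hbar)); [|apply Rinv_neq_0_compat; lra].
    unfold Rdiv in Hw. lra.
Qed.

Lemma time_avg_is_rhop_trunc n N : time_avg_is (rhop_trunc n N) (mu_trunc n N).
Proof.
  replace (mu_trunc n N)
    with (sumC (fun k => sumC (fun l => if Nat.eqb k l then coef n k k else RtoC 0) N) N).
  - apply (time_avg_is_sumC (fun k t => sumC (fun l => osc n k l t) N)). intros k.
    apply (time_avg_is_sumC (fun l t => osc n k l t)). intros l. apply time_avg_is_osc.
  - apply sumC_ext. intros k Hk.
    rewrite (sumC_ext _ (fun l => if Nat.eqb l k then coef n l l else RtoC 0)).
    + rewrite sumC_delta. destruct (Nat.ltb_spec k N); [reflexivity | lia].
    + intros l _. rewrite Nat.eqb_sym. destruct (Nat.eqb_spec l k); subst; reflexivity.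
Qed.

Lemma mu_SeriesC n : mu D U rho n = SeriesC (fun k => coef n k k).
Proof.
  assert (Hterm : forall k,
             mask D (fun k => (RtoC (Cmod (U n k) ^ 2) * rho k k)%C) k = coef n k k).
  { intros k. unfold mask, coef. destruct (inIb D k); [|reflexivity].
    rewrite Cmod2_conj. reflexivity. }
  unfold mu, csum, SeriesC. f_equal; apply Series_ext; intros k; rewrite Hterm; reflexivity.
Qed.

Lemma Cmod_coef_diag_le n k : inI D n -> Cmod (coef n k k) <= pop D rho k.
Proof.
  intros Hn. pose proof (pop_ge0 D rho hrho k).
  unfold coef. destruct (inIb D k) eqn:Hk; simpl; [|rewrite Cmod_0; lra].
  rewrite !Cmod_mult, Cmod_conj, (Cmod_diag_pop D rho hrho k Hk).
  pose proof (Uabs_le1 D U hU n k Hn) as H1. unfold Uabs in H1. rewrite Hk in H1.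
  pose proof (Cmod_ge_0 (U n k)).
  assert (Cmod (U n k) * Cmod (U n k) <= 1) by nra. nra.
Qed.

Lemma Cmod_mu_trunc_le1 n N : inI D n -> Cmod (mu_trunc n N) <= 1.
Proof.
  intros Hn. eapply Rle_trans; [|apply (sumR_pop_le1 D rho hrho N)].
  apply Cmod_sumC_le. intros k. apply Cmod_coef_diag_le, Hn.
Qed.

Lemma mu_trunc_close n : inI D n -> forall eps, 0 < eps -> exists N0,
  forall N, (N0 <= N)%nat -> Cmod (mu D U rho n - mu_trunc n N) <= eps.
Proof.
  intros Hn. rewrite mu_SeriesC. apply SeriesC_sumC_close;
    apply (ex_series_le (V := R_CompleteNormedModule) _ (pop D rho));
    try apply (ex_series_pop D rho hrho); intros k;
    (eapply Rle_trans; [|apply (Cmod_coef_diag_le n k Hn)]).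
  - apply re_le_Cmod.
  - apply Im_le_Cmod.
Qed.

Lemma time_avg_is_rhop n : inI D n ->
  time_avg_is (rhop D E hbar U rho n) (mu D U rho n).
Proof.
  intros Hn. apply (time_avg_is_uniform_lim _ _ (rhop_trunc n) (mu_trunc n));
    [apply time_avg_is_rhop_trunc|].
  intros eps Heps.
  destruct (rhop_trunc_close n Hn eps Heps) as [N1 H1].
  destruct (mu_trunc_close n Hn eps Heps) as [N2 H2].
  exists (max N1 N2). intros N HN. split; [apply H1 | apply H2]; lia.
Qed.

Definition resonant k l k' l' : bool :=
  (Nat.eqb k l && Nat.eqb k' l' || Nat.eqb k l' && Nat.eqb l k')%bool.

Lemma freq_plus_eq0 k l k' l' : inI D k -> inI D l -> inI D k' -> inI D l' ->
  freq k l + freq k' l' = 0 -> resonant k l k' l' = true.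
Proof.
  intros Hk Hl Hk' Hl' Hw.
  assert (Hgap : E k - E l = E l' - E k').
  { unfold freq in Hw. apply (Rmult_eq_reg_r (/ hbar)); [|apply Rinv_neq_0_compat; lra].
    unfold Rdiv in Hw. lra. }
  unfold resonant. destruct (Nat.eq_dec k l) as [<- | Hkl].
  - assert (k' = l') by (apply hA; auto; lra). subst. rewrite !Nat.eqb_refl. reflexivity.
  - assert (Hne : E k - E l <> 0) by (intros H0; apply Hkl, hA; auto; lra).
    destruct (hB k l l' k' Hk Hl Hl' Hk' Hgap Hne) as [-> ->].
    rewrite !Nat.eqb_refl, Bool.orb_true_r. reflexivity.
Qed.

Lemma time_avg_is_osc_mul m n k l k' l' :
  time_avg_is (fun t => osc m k l t * osc n k' l' t)%C
    (if resonant k l k' l' then coef m k l * coef n k' l' else RtoC 0)%C.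
Proof.
  set (P := (coef m k l * coef n k' l')%C).
  apply (time_avg_is_ext (fun t => P * cexpi ((freq k l + freq k' l') * t))%C).
  { intros t. unfold osc, P. rewrite Rmult_plus_distr_r, <- cexpi_plus. ring. }
  replace (if resonant k l k' l' then P else RtoC 0)
    with (if Req_dec_T (freq k l + freq k' l') 0 then P else RtoC 0);
    [apply time_avg_is_scal_cexpi|].
  destruct (resonant k l k' l') eqn:Hres, (Req_dec_T (freq k l + freq k' l') 0) as [Hw | Hw];
    try reflexivity.
  - exfalso. apply Hw. unfold resonant in Hres.
    destruct (Nat.eqb_spec k l), (Nat.eqb_spec k' l'), (Nat.eqb_spec k l'),
      (Nat.eqb_spec l k'); simpl in Hres; try discriminate; subst; unfold freq; field; lra.
  - unfold P, coef.
    destruct (inIb D k) eqn:Hk, (inIb D l) eqn:Hl, (inIb D k') eqn:Hk', (inIb D l') eqn:Hl';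
      simpl; try ring.
    rewrite freq_plus_eq0 in Hres; auto. discriminate.
Qed.

Definition nu_trunc m n N : C :=
  sumC (fun k => sumC (fun l =>
    if Nat.eqb k l then RtoC 0 else (coef m k l * coef n l k)%C) N) N.

Lemma rhop_trunc_mul m n N t :
  (rhop_trunc m N t * rhop_trunc n N t)%C =
  sumC (fun k => sumC (fun k' => sumC (fun l => sumC (fun l' =>
    osc m k l t * osc n k' l' t)%C N) N) N) N.
Proof.
  unfold rhop_trunc. rewrite <- sumC_mul.
  apply sumC_ext; intros k _. apply sumC_ext; intros k' _.
  rewrite <- sumC_mul. reflexivity.
Qed.

(* A resonance is either diagonal (k = l, k' = l') or a swap (l' = k, l = k', k <> l). *)
Lemma sumC_resonant m n N :
  sumC (fun k => sumC (fun k' => sumC (fun l => sumC (fun l' =>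
    if resonant k l k' l' then coef m k l * coef n k' l' else RtoC 0)%C N) N) N) N =
  (mu_trunc m N * mu_trunc n N + nu_trunc m n N)%C.
Proof.
  unfold mu_trunc, nu_trunc. rewrite <- sumC_mul, <- sumC_plus.
  apply sumC_ext; intros k Hk. rewrite <- sumC_plus. apply sumC_ext; intros k' Hk'.
  rewrite (sumC_ext _ (fun l =>
             (if Nat.eqb l k then coef m k l * coef n k' k' else RtoC 0) +
             (if Nat.eqb l k' then (if Nat.eqb k l then RtoC 0 else coef m k l * coef n l k)
              else RtoC 0))%C).
  { rewrite sumC_plus, !sumC_delta.
    destruct (Nat.ltb_spec k N), (Nat.ltb_spec k' N); [reflexivity | lia..]. }
  intros l _.
  rewrite (sumC_ext _ (fun l' =>
             (if Nat.eqb l' k' then (if Nat.eqb k l then coef m k l * coef n k' l'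
                                     else RtoC 0) else RtoC 0) +
             (if Nat.eqb l' k then (if Nat.eqb l k' && negb (Nat.eqb k l)
                                    then coef m k l * coef n k' l' else RtoC 0)%bool
              else RtoC 0))%C).
  - rewrite sumC_plus, !sumC_delta.
    destruct (Nat.ltb_spec k N), (Nat.ltb_spec k' N); try lia.
    destruct (Nat.eqb_spec l k), (Nat.eqb_spec k l), (Nat.eqb_spec l k');
      subst; simpl; try lia; ring.
  - intros l' _. unfold resonant.
    destruct (Nat.eqb_spec k l), (Nat.eqb_spec k' l'), (Nat.eqb_spec k l'),
      (Nat.eqb_spec l k'), (Nat.eqb_spec l' k'), (Nat.eqb_spec l' k);
      subst; simpl; try lia; ring.
Qed.

Lemma time_avg_is_rhop_trunc_mul m n N :
  time_avg_is (fun t => rhop_trunc m N t * rhop_trunc n N t)%C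
    (mu_trunc m N * mu_trunc n N + nu_trunc m n N)%C.
Proof.
  rewrite <- sumC_resonant.
  apply (time_avg_is_ext _ _ _ (fun t => eq_sym (rhop_trunc_mul m n N t))).
  apply (time_avg_is_sumC (fun k t => _)); intros k.
  apply (time_avg_is_sumC (fun k' t => _)); intros k'.
  apply (time_avg_is_sumC (fun l t => _)); intros l.
  apply (time_avg_is_sumC (fun l' t => _)); intros l'.
  apply time_avg_is_osc_mul.
Qed.

Definition nu_term m n k l : C :=
  if (inIb D k && inIb D l)%bool then
    if Nat.eqb k l then RtoC 0 else
    (U m k * Cconj (U m l) * Cconj (U n k) * U n l * RtoC (Cmod (rho k l) ^ 2))%C
  else RtoC 0.

Lemma nu_SeriesC m n : nu D U rho m n = SeriesC (fun k => SeriesC (nu_term m n k)).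
Proof. unfold nu. rewrite csum_csum. reflexivity. Qed.

Lemma nu_trunc_eq m n N : nu_trunc m n N = sumC (fun k => sumC (nu_term m n k) N) N.
Proof.
  apply sumC_ext; intros k _. apply sumC_ext; intros l _.
  unfold nu_term, coef. destruct (Nat.eqb k l); [destruct (inIb D k && inIb D l)%bool; reflexivity|].
  destruct (inIb D k) eqn:Hk, (inIb D l) eqn:Hl; cbv [andb]; try ring.
  destruct hrho as [Hherm _]. rewrite (Hherm k l Hk Hl), Cmod2_conj. ring.
Qed.

Lemma Cmod_nu_term_le m n k l : inI D m -> inI D n ->
  Cmod (nu_term m n k l) <= pop D rho k * pop D rho l.
Proof.
  intros Hm Hn.
  pose proof (pop_ge0 D rho hrho k); pose proof (pop_ge0 D rho hrho l).
  unfold nu_term. destruct (inIb D k) eqn:Hk, (inIb D l) eqn:Hl; cbv [andb];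
    try (rewrite Cmod_0; nra).
  destruct (Nat.eqb k l); [rewrite Cmod_0; nra|].
  rewrite !Cmod_mult, !Cmod_conj, Cmod_R, Rabs_pos_eq by (apply pow_le, Cmod_ge_0).
  pose proof (Cmod2_le_pop D rho hrho k l Hk Hl).
  pose proof (pow_le _ 2 (Cmod_ge_0 (rho k l))).
  assert (Habs : forall i j, inI D i -> inI D j -> 0 <= Cmod (U i j) <= 1).
  { intros i j Hi Hj. pose proof (Uabs_le1 D U hU i j Hi) as Hle.
    unfold Uabs in Hle. rewrite Hj in Hle. split; [apply Cmod_ge_0 | exact Hle]. }
  pose proof (Habs m k Hm Hk); pose proof (Habs m l Hm Hl).
  pose proof (Habs n k Hn Hk); pose proof (Habs n l Hn Hl).
  assert (Hprod : Cmod (U m k) * Cmod (U m l) * Cmod (U n k) * Cmod (U n l) <= 1).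
  { assert (0 <= Cmod (U m k) * Cmod (U m l) <= 1) by (split; nra).
    assert (0 <= Cmod (U n k) * Cmod (U n l) <= 1) by (split; nra).
    replace (Cmod (U m k) * Cmod (U m l) * Cmod (U n k) * Cmod (U n l))
      with ((Cmod (U m k) * Cmod (U m l)) * (Cmod (U n k) * Cmod (U n l))) by ring.
    nra. }
  assert (0 <= Cmod (U m k) * Cmod (U m l) * Cmod (U n k) * Cmod (U n l))
    by (repeat apply Rmult_le_pos; apply Cmod_ge_0).
  nra.
Qed.

Lemma nu_trunc_close m n : inI D m -> inI D n -> forall eps, 0 < eps -> exists N0,
  forall N, (N0 <= N)%nat -> Cmod (nu D U rho m n - nu_trunc m n N) <= eps.
Proof.
  intros Hm Hn eps Heps.
  destruct (SeriesC_SeriesC_square_sums_unif (fun k l => pop D rho k * pop D rho l) 1)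
    with (eps := eps) as [N0 HN0]; auto.
  - intros k l. apply Rmult_le_pos; apply pop_ge0; auto.
  - intros N. rewrite sumR_mul.
    pose proof (sumR_pop_le1 D rho hrho N). pose proof (sumR_ge0 _ N (pop_ge0 D rho hrho)).
    nra.
  - exists N0. intros N HN. rewrite nu_SeriesC, nu_trunc_eq.
    apply HN0; auto. intros; apply Cmod_nu_term_le; auto.
Qed.

Lemma time_avg_is_rhop_mul m n : inI D m -> inI D n ->
  time_avg_is (fun t => rhop D E hbar U rho m t * rhop D E hbar U rho n t)%C
    (mu D U rho m * mu D U rho n + nu D U rho m n)%C.
Proof.
  intros Hm Hn.
  apply (time_avg_is_uniform_lim _ _ (fun N t => rhop_trunc m N t * rhop_trunc n N t)%C
           (fun N => mu_trunc m N * mu_trunc n N + nu_trunc m n N)%C);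
    [apply time_avg_is_rhop_trunc_mul|].
  intros eps Heps. set (e := Rmin 1 (eps / 4)).
  assert (He0 : 0 < e) by (apply Rmin_glb_lt; lra).
  assert (He1 : e <= 1) by apply Rmin_l. assert (He4 : e <= eps / 4) by apply Rmin_r.
  destruct (rhop_trunc_close m Hm e He0) as [N1 H1].
  destruct (rhop_trunc_close n Hn e He0) as [N2 H2].
  destruct (mu_trunc_close m Hm e He0) as [N3 H3].
  destruct (mu_trunc_close n Hn e He0) as [N4 H4].
  destruct (nu_trunc_close m n Hm Hn e He0) as [N5 H5].
  exists (max N1 (max N2 (max N3 (max N4 N5)))). intros N HN. split.
  - intros t.
    assert (Cmod (rhop D E hbar U rho m t * rhop D E hbar U rho n t -
                  rhop_trunc m N t * rhop_trunc n N t) <= 3 * e)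
      by (apply Cmod_mul_sub_le; [apply Cmod_rhop_trunc_le1 | apply Cmod_rhop_trunc_le1
                                 | apply H1 | apply H2 | ..]; auto; lia).
    lra.
  - replace (mu D U rho m * mu D U rho n + nu D U rho m n -
             (mu_trunc m N * mu_trunc n N + nu_trunc m n N))%C
      with ((mu D U rho m * mu D U rho n - mu_trunc m N * mu_trunc n N) +
            (nu D U rho m n - nu_trunc m n N))%C by ring.
    eapply Rle_trans; [apply Cmod_triangle|].
    assert (Cmod (mu D U rho m * mu D U rho n - mu_trunc m N * mu_trunc n N) <= 3 * e)
      by (apply Cmod_mul_sub_le; [apply Cmod_mu_trunc_le1 | apply Cmod_mu_trunc_le1
                                 | apply H3 | apply H4 | ..]; auto; lia).
    specialize (H5 N ltac:(lia)). lra.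
Qed.

End Dynamics.

Theorem lemma1 (D : option nat) (E E' : nat -> R) (hbar : R)
  (U rho0 : nat -> nat -> C)
  (hA : nondegenerate D E) (hA' : nondegenerate D E')
  (hB : nondegenerate_gaps D E) (hB' : nondegenerate_gaps D E')
  (hrho : density_mx D rho0) (hU : unitary_mx D U) (hhbar : 0 < hbar) :
  forall m n, inI D m -> inI D n ->
    time_avg_is (rhop D E hbar U rho0 n) (mu D U rho0 n) /\
    time_avg_is (fun tau => (rhop D E hbar U rho0 m tau * rhop D E hbar U rho0 n tau)%C)
                ((mu D U rho0 m * mu D U rho0 n + nu D U rho0 m n)%C).
Proof.
  intros m n Hm Hn. split.
  - exact (time_avg_is_rhop D E hbar U rho0 hA hrho hU hhbar n Hn).
  - exact (time_avg_is_rhop_mul D E hbar U rho0 hA hB hrho hU hhbar m n Hm Hn).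
Qed.
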